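(* Assume the Setting and consider Algorithm 2 with $0<\mu_0<4\sigma(1-\eta)$. (i) If $F(x_n)=y$ for some $n\ge0$, then $x_m=x_n$ for all $m>n$. (ii) If $\xi_{n+1}=\xi_n$ for some $n\ge0$, then $F(x_n)=y$, and $x_m=x_n$ and $\xi_m=\xi_n$ for all $m>n$.
   Context: Setting. Let $X,Y$ be real Hilbert spaces. Let $\mathcal R:X\to(-\infty,\infty]$ be proper, lower semicontinuous and strongly convex with constant $\sigma>0$, i.e. $\mathcal R(t\bar x+(1-t)x)+\sigma t(1-t)\|\bar x-x\|^2\le t\mathcal R(\bar x)+(1-t)\mathcal R(x)$ for all $\bar x,x\in\mathrm{dom}(\mathcal R)$ and $t\in[0,1]$. For $\xi\in\partial\mathcal R(x)$ (subdifferential) the Bregman distance is $D_{\mathcal R}^{\xi}(z,x)=\mathcal R(z)-\mathcal R(x)-\langle\xi,z-x\rangle$. The convex conjugate $\mathcal R^*$ is differentiable with $\|\nabla\mathcal R^*(\bar\xi)-\nabla\mathcal R^*(\xi)\|\le\|\bar\xi-\xi\|/(2\sigma)$, and $\nabla\mathcal R^*(\xi)=\arg\min_{x\in X}\{\mathcal R(x)-\langle\xi,x\rangle\}$ (unique minimizer), with $\xi\in\partial\mathcal R(\nabla\mathcal R^*(\xi))$. Let $F:\mathrm{dom}(F)\subset X\to Y$ and $y\in Y$. Assume: (b) there are $\rho>0$, $x_0\in X$, $\xi_0\in\partial\mathcal R(x_0)$ with $B_{2\rho}(x_0):=\{x:\|x-x_0\|\le 2\rho\}\subset\mathrm{dom}(F)$,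 and $F(x)=y$ has a solution $\bar x$ with $D_{\mathcal R}^{\xi_0}(\bar x,x_0)\le\sigma\rho^2$; (c) $F$ is weakly closed: if $x_n\in\mathrm{dom}(F)$, $x_n\rightharpoonup x$ and $F(x_n)\to v$, then $x\in\mathrm{dom}(F)$ and $F(x)=v$; (d) there are bounded linear operators $L(x):X\to Y$, $x\in B_{2\rho}(x_0)$, with $x\mapsto L(x)$ continuous on $B_{2\rho}(x_0)$, a constant $\eta\in[0,1)$ with $\|F(x)-F(\bar x)-L(\bar x)(x-\bar x)\|\le\eta\|F(x)-F(\bar x)\|$ for all $x,\bar x\in B_{2\rho}(x_0)$, and a constant $L>0$ with $\|L(x)\|\le L$ on $B_{2\rho}(x_0)$. Algorithm 2 (exact data $y$). Parameters: $\beta\in(0,\infty]$, $\mu_0>0$, $\mu_1>0$, and a fixed choice of step-size rule: (constant) $\alpha_n=\mu_0/L^2$, or (adaptive) $\alpha_n=\min\{\mu_0\|r_n\|^2/\|g_n\|^2,\mu_1\}$ if $r_n\ne0$ and $\alpha_n=0$ if $r_n=0$ (with $\mu_0\|r_n\|^2/\|g_n\|^2:=+\infty$ if $g_n=0$). Set $\xi_{-1}=\xi_0$, $x_0=\nabla\mathcal R^*(\xi_0)$. For all $n\ge0$ (no stopping): $r_n:=F(x_n)-y$, $g_n:=L(x_n)^*r_n$, $\alpha_n$ by the chosen rule; $m_n:=\xi_n-\xi_{n-1}$; $\tilde\gamma_0:=0$ and for $n\ge1$, $\tilde\gamma_n:=\langle m_n,x_n-x_{n-1}\rangle-(1-\eta)\alpha_{n-1}\|r_{n-1}\|^2+\beta_{n-1}\tilde\gamma_{n-1}$;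 $\beta_n:=\min\{\max\{0,(\alpha_n\langle g_n,m_n\rangle-2\sigma\tilde\gamma_n)/\|m_n\|^2\},\beta\}$ if $m_n\ne0$ and $\beta_n:=0$ if $m_n=0$; $\xi_{n+1}:=\xi_n-\alpha_ng_n+\beta_nm_n$, $x_{n+1}:=\nabla\mathcal R^*(\xi_{n+1})$. *)

From Stdlib Require Import Reals.
From Coquelicot Require Import Rbar.
Open Scope R_scope.

Record Hilbert := {
  hcar :> Type;
  hzero : hcar;
  hadd : hcar -> hcar -> hcar;
  hopp : hcar -> hcar;
  hscal : R -> hcar -> hcar;
  hinner : hcar -> hcar -> R;
  hadd_assoc : forall u v w, hadd u (hadd v w) = hadd (hadd u v) w;
  hadd_comm : forall u v, hadd u v = hadd v u;
  hadd_zero : forall u, hadd u hzero = u;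
  hadd_opp : forall u, hadd u (hopp u) = hzero;
  hscal_assoc : forall a b u, hscal a (hscal b u) = hscal (a * b) u;
  hscal_one : forall u, hscal 1 u = u;
  hscal_distr_l : forall a u v, hscal a (hadd u v) = hadd (hscal a u) (hscal a v);
  hscal_distr_r : forall a b u, hscal (a + b) u = hadd (hscal a u) (hscal b u);
  hinner_sym : forall u v, hinner u v = hinner v u;
  hinner_add_l : forall u v w, hinner (hadd u v) w = hinner u w + hinner v w;
  hinner_scal_l : forall a u v, hinner (hscal a u) v = a * hinner u v;
  hinner_pos : forall u, 0 <= hinner u u;
  hinner_def : forall u, hinner u u = 0 -> u = hzero;
  hcomplete : forall u : nat -> hcar,
    (forall eps, 0 < eps -> exists N, forall m n, (N <= m)%nat -> (N <= n)%nat ->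
        sqrt (hinner (hadd (u m) (hopp (u n))) (hadd (u m) (hopp (u n)))) < eps) ->
    exists l, forall eps, 0 < eps -> exists N, forall n, (N <= n)%nat ->
        sqrt (hinner (hadd (u n) (hopp l)) (hadd (u n) (hopp l))) < eps
}.

Arguments hzero {_}.
Arguments hadd {_}.
Arguments hopp {_}.
Arguments hscal {_}.
Arguments hinner {_}.

Definition hsub {H : Hilbert} (u v : H) : H := hadd u (hopp v).
Definition hnorm {H : Hilbert} (u : H) : R := sqrt (hinner u u).

Definition hcvg {H : Hilbert} (u : nat -> H) (l : H) : Prop :=
  forall eps, 0 < eps -> exists N, forall n, (N <= n)%nat -> hnorm (hsub (u n) l) < eps.

Definition hweak_cvg {H : Hilbert} (u : nat -> H) (l : H) : Prop :=
  forall z : H, Un_cv (fun n => hinner (u n) z) (hinner l z).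

Definition hball {H : Hilbert} (x0 : H) (r : R) (x : H) : Prop := hnorm (hsub x x0) <= r.

Definition in_dom {X : Hilbert} (Rf : X -> Rbar) (x : X) : Prop :=
  exists a : R, Rf x = Finite a.

Definition proper_fun {X : Hilbert} (Rf : X -> Rbar) : Prop :=
  (forall x, Rf x <> m_infty) /\ exists x, in_dom Rf x.

Definition lsc_fun {X : Hilbert} (Rf : X -> Rbar) : Prop :=
  forall (x : X) (t : R), Rbar_lt (Finite t) (Rf x) ->
    exists d, 0 < d /\ forall z, hnorm (hsub z x) < d -> Rbar_lt (Finite t) (Rf z).

Definition strongly_convex {X : Hilbert} (Rf : X -> Rbar) (sigma : R) : Prop :=
  forall (xb x : X) (a b t : R), Rf xb = Finite a -> Rf x = Finite b -> 0 <= t <= 1 ->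
    Rbar_le (Rbar_plus (Rf (hadd (hscal t xb) (hscal (1 - t) x)))
                       (Finite (sigma * t * (1 - t) * (hnorm (hsub xb x)) ^ 2)))
            (Finite (t * a + (1 - t) * b)).

Definition subdiff {X : Hilbert} (Rf : X -> Rbar) (x xi : X) : Prop :=
  exists b : R, Rf x = Finite b /\
    forall z, Rbar_le (Finite (b + hinner xi (hsub z x))) (Rf z).

Definition bregman_le {X : Hilbert} (Rf : X -> Rbar) (xi z x : X) (c : R) : Prop :=
  exists a b : R, Rf z = Finite a /\ Rf x = Finite b /\ a - b - hinner xi (hsub z x) <= c.

(* x = grad R^*(xi) = argmin_z { R(z) - <xi, z> } *)
Definition is_gradRstar {X : Hilbert} (Rf : X -> Rbar) (xi x : X) : Prop :=
  in_dom Rf x /\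
  forall z, Rbar_le (Rbar_plus (Rf x) (Finite (- hinner xi x)))
                    (Rbar_plus (Rf z) (Finite (- hinner xi z))).

Inductive step_rule := ConstantStep | AdaptiveStep.

Definition betacap (beta : Rbar) (t : R) : R :=
  match beta with Finite b => Rmin t b | _ => t end.

(* m_n = xi_n - xi_{n-1}, with xi_{-1} = xi_0, i.e. m_0 = 0 *)
Definition mom {X : Hilbert} (xi : nat -> X) (n : nat) : X :=
  match n with O => hzero | S k => hsub (xi (S k)) (xi k) end.

Definition alg2_run {X Y : Hilbert} (Rf : X -> Rbar) (F : X -> Y) (y : Y)
    (Lstar : X -> Y -> X) (sigma eta Lc : R) (beta : Rbar) (mu0 mu1 : R)
    (rule : step_rule) (xi0 : X)
    (xi x : nat -> X) (alpha bet gam : nat -> R) : Prop :=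
  let r := fun n => hsub (F (x n)) y in
  let g := fun n => Lstar (x n) (r n) in
  let m := mom xi in
  xi 0%nat = xi0 /\
  (forall n, is_gradRstar Rf (xi n) (x n)) /\
  (forall n, match rule with
             | ConstantStep => alpha n = mu0 / Lc ^ 2
             | AdaptiveStep =>
                 (r n = hzero -> alpha n = 0) /\
                 (r n <> hzero -> g n = hzero -> alpha n = mu1) /\
                 (r n <> hzero -> g n <> hzero ->
                    alpha n = Rmin (mu0 * (hnorm (r n)) ^ 2 / (hnorm (g n)) ^ 2) mu1)
             end) /\
  gam 0%nat = 0 /\
  (forall n, gam (S n) = hinner (m (S n)) (hsub (x (S n)) (x n))
                         - (1 - eta) * alpha n * (hnorm (r n)) ^ 2
                         + bet n * gam n) /\
  (forall n, (m n = hzero -> bet n = 0) /\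
             (m n <> hzero -> bet n = betacap beta
                (Rmax 0 ((alpha n * hinner (g n) (m n) - 2 * sigma * gam n)
                         / (hnorm (m n)) ^ 2)))) /\
  (forall n, xi (S n) = hadd (hsub (xi n) (hscal (alpha n) (g n)))
                             (hscal (bet n) (m n))).

(* The quantities gam_n are built so that <m_n, x_n - xh> <= gam_n for every solution xh
   of F xh = y near x0.  With the tangential cone condition, mu0 < 4 sigma (1 - eta) and the
   choice of beta_n, this makes the Bregman distance D^{xi_n}(xh, x_n) nonincreasing, which
   also keeps the iterates in the ball B_{2 rho}(x0).
   (i) For the solution xh = x_n this distance vanishes at step n, hence stays zero, and
   strong convexity gives x_m = x_n.
   (ii) If xi_{n+1} = xi_n then m_{n+1} = 0, and the same estimate reduces to
   (1 - eta) alpha_n |F x_n - y|^2 <= beta_n gam_n <= 0, while alpha_n > 0 unless F x_n = y.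
   From then on g_m = 0, so m_{m+1} = beta_m m_m stays 0 and xi is constant. *)

From Stdlib Require Import Reals Lra Psatz Lia Classical.
From Coquelicot Require Import Rbar.
Open Scope R_scope.

Section HilbertFacts.

Context {H : Hilbert}.
Implicit Types u v w : H.

Lemma hinner_zero_l w : hinner hzero w = 0.
Proof. pose proof (hinner_add_l H hzero hzero w) as E. rewrite hadd_zero in E. lra. Qed.

Lemma hinner_opp_l u w : hinner (hopp u) w = - hinner u w.
Proof.
  pose proof (hinner_add_l H u (hopp u) w) as E.
  rewrite hadd_opp, hinner_zero_l in E. lra.
Qed.

Lemma hinner_sub_l u v w : hinner (hsub u v) w = hinner u w - hinner v w.
Proof. unfold hsub. rewrite hinner_add_l, hinner_opp_l. lra. Qed.

Lemma hinner_zero_r w : hinner w hzero = 0.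
Proof. rewrite hinner_sym. apply hinner_zero_l. Qed.

Lemma hinner_add_r u v w : hinner w (hadd u v) = hinner w u + hinner w v.
Proof. rewrite !(hinner_sym H w). apply hinner_add_l. Qed.

Lemma hinner_opp_r u w : hinner w (hopp u) = - hinner w u.
Proof. rewrite !(hinner_sym H w). apply hinner_opp_l. Qed.

Lemma hinner_scal_r a u w : hinner w (hscal a u) = a * hinner w u.
Proof. rewrite !(hinner_sym H w). apply hinner_scal_l. Qed.

Lemma hinner_sub_r u v w : hinner w (hsub u v) = hinner w u - hinner w v.
Proof. rewrite !(hinner_sym H w). apply hinner_sub_l. Qed.

End HilbertFacts.

Ltac hinner_expand := repeat rewrite ?hinner_add_l, ?hinner_add_r, ?hinner_sub_l,
  ?hinner_sub_r, ?hinner_scal_l, ?hinner_scal_r, ?hinner_opp_l, ?hinner_opp_r,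
  ?hinner_zero_l, ?hinner_zero_r.
Ltac hinner_expand_in P := revert P; hinner_expand; intro P.

Section HilbertGeometry.

Context {H : Hilbert}.
Implicit Types u v w : H.

Lemma hsub_eq0 u v : hsub u v = hzero -> u = v.
Proof.
  unfold hsub; intro E.
  assert (E2 : hadd (hadd u (hopp v)) v = v) by (rewrite E, hadd_comm, hadd_zero; auto).
  rewrite <- hadd_assoc, (hadd_comm H (hopp v)), hadd_opp, hadd_zero in E2. exact E2.
Qed.

Lemma hsub_self u : hsub u u = hzero.
Proof. apply hadd_opp. Qed.

Lemma hinner_inj u v : (forall w, hinner u w = hinner v w) -> u = v.
Proof. intro E. apply hsub_eq0, hinner_def. rewrite hinner_sub_l, !E. lra. Qed.

Lemma hinner_self_le0 u : hinner u u <= 0 -> u = hzero.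
Proof. intro; apply hinner_def. pose proof (hinner_pos H u). lra. Qed.

Lemma hinner_self_gt0 u : u <> hzero -> 0 < hinner u u.
Proof.
  intro Hu. destruct (Rle_lt_or_eq_dec _ _ (hinner_pos H u)) as [P|P]; [exact P|].
  exfalso. apply Hu, hinner_def. auto.
Qed.

Lemma hopp_scal u : hopp u = hscal (-1) u.
Proof. apply hinner_inj; intro w. hinner_expand. ring. Qed.

Lemma hnorm_nonneg u : 0 <= hnorm u.
Proof. apply sqrt_pos. Qed.

Lemma hnorm_mul_self u : hnorm u * hnorm u = hinner u u.
Proof. apply sqrt_sqrt, hinner_pos. Qed.

Lemma hnorm_sq u : hnorm u ^ 2 = hinner u u.
Proof. rewrite <- hnorm_mul_self. ring. Qed.

Lemma hnorm_opp u : hnorm (hopp u) = hnorm u.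
Proof. unfold hnorm. f_equal. hinner_expand. ring. Qed.

Lemma hinner_young t u v : 2 * t * hinner u v <= t * t * hinner u u + hinner v v.
Proof.
  pose proof (hinner_pos H (hsub (hscal t u) v)) as P. hinner_expand_in P.
  rewrite (hinner_sym H v u) in P. nra.
Qed.

Lemma cauchy_schwarz u v : hinner u v <= hnorm u * hnorm v.
Proof.
  pose proof (hnorm_nonneg u) as Pu; pose proof (hnorm_nonneg v) as Pv.
  pose proof (hnorm_mul_self u) as Su; pose proof (hnorm_mul_self v) as Sv.
  destruct (Req_dec (hnorm u) 0) as [Zu|Zu].
  { assert (u = hzero) as -> by (apply hinner_def; nra). rewrite hinner_zero_l. nra. }
  destruct (Req_dec (hnorm v) 0) as [Zv|Zv].
  { assert (v = hzero) as -> by (apply hinner_def; nra). rewrite hinner_zero_r. nra. }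
  (* Young's inequality at the optimal scale t = |v| / |u|. *)
  pose proof (hinner_young (hnorm v / hnorm u) u v) as Y.
  set (q := hnorm v / hnorm u) in Y.
  assert (Hq : q * hnorm u = hnorm v) by (unfold q; field; auto).
  rewrite <- Su, <- Sv in Y.
  replace (q * q * (hnorm u * hnorm u)) with (hnorm v * hnorm v) in Y by (rewrite <- Hq; ring).
  apply (Rmult_le_compat_l (hnorm u)) in Y; [|lra].
  apply (Rmult_le_reg_l (2 * hnorm v)); [lra|].
  replace (hnorm u * (2 * q * hinner u v)) with (2 * hnorm v * hinner u v) in Y
    by (rewrite <- Hq; ring).
  nra.
Qed.

Lemma hball_of_common_near (x0 c z : H) rho : 0 <= rho ->
  hinner (hsub c x0) (hsub c x0) <= rho * rho ->
  hinner (hsub c z) (hsub c z) <= rho * rho -> hball x0 (2 * rho) z.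
Proof.
  intros Hrho Hc Hz. unfold hball, hnorm.
  rewrite <- (sqrt_square (2 * rho)) by lra. apply sqrt_le_1_alt.
  pose proof (hinner_young (-1) (hsub c x0) (hsub c z)) as Y.
  replace (hsub z x0) with (hsub (hsub c x0) (hsub c z))
    by (apply hinner_inj; intro w; hinner_expand; ring).
  revert Y Hc Hz. hinner_expand.
  rewrite (hinner_sym H x0 c), (hinner_sym H z c), (hinner_sym H z x0). lra.
Qed.

Lemma hinner_near_opp_le (r v : H) eta :
  hnorm (hsub (hopp r) v) <= eta * hnorm r -> (1 - eta) * hinner r r <= - hinner r v.
Proof.
  intro Hv.
  pose proof (cauchy_schwarz (hopp r) (hsub (hopp r) v)) as C.
  rewrite hnorm_opp in C. revert C. hinner_expand. intro C.
  pose proof (hnorm_nonneg r). pose proof (hnorm_mul_self r).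
  assert (hnorm r * hnorm (hsub (hopp r) v) <= hnorm r * (eta * hnorm r))
    by (apply Rmult_le_compat_l; auto).
  nra.
Qed.

End HilbertGeometry.

Lemma Rle_of_forall_contract (A D : R) : 0 <= A ->
  (forall t, 0 < t < 1 -> (1 - t) * A <= D) -> A <= D.
Proof.
  intros HA Ht. destruct (Rle_dec A D) as [ok|nok]; [exact ok|exfalso].
  set (t := (A - D) / (2 * (A - D + A))).
  assert (Et : t * (2 * (A - D + A)) = A - D) by (unfold t; field; lra).
  assert (Htt : 0 < t < 1).
  { split; [unfold t; apply Rdiv_lt_0_compat; lra|nra]. }
  specialize (Ht t Htt). nra.
Qed.

Definition bregman {X : Hilbert} (Rf : X -> Rbar) (xi z x : X) : R :=
  real (Rf z) - real (Rf x) - hinner xi (hsub z x).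

Lemma bregman_self {X : Hilbert} (Rf : X -> Rbar) (xi x : X) : bregman Rf xi x x = 0.
Proof. unfold bregman. rewrite hsub_self, hinner_zero_r. ring. Qed.

Lemma bregman_three_point {X : Hilbert} (Rf : X -> Rbar) (xi xi' z x x' : X) :
  bregman Rf xi' z x' - bregman Rf xi z x =
  - bregman Rf xi x' x + hinner (hsub xi' xi) (hsub x' z).
Proof. unfold bregman. hinner_expand. ring. Qed.

Lemma bregman_le_real {X : Hilbert} (Rf : X -> Rbar) (xi z x : X) c :
  bregman_le Rf xi z x c -> in_dom Rf z /\ bregman Rf xi z x <= c.
Proof.
  intros (a & b & Ha & Hb & Hc). split; [exists a; exact Ha|].
  unfold bregman. rewrite Ha, Hb. exact Hc.
Qed.

Lemma gradRstar_subdiff {X : Hilbert} (Rf : X -> Rbar) (xi u : X) :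
  is_gradRstar Rf xi u -> subdiff Rf u xi.
Proof.
  intros [[b Hb] Hm]. exists b. split; [exact Hb|]. intro z.
  specialize (Hm z). rewrite Hb in Hm. destruct (Rf z) as [a| |]; simpl in *; auto.
  rewrite hinner_sub_r. lra.
Qed.

Section StrongConvexity.

Context {X : Hilbert} (Rf : X -> Rbar) (sigma : R).
Hypothesis Hsigma : 0 < sigma.
Hypothesis HRsc : strongly_convex Rf sigma.

(* The subgradient inequality at the convex combination t z + (1 - t) x, divided by t,
   gives sigma (1 - t) |z - x|^2 <= D; now let t tend to 0. *)
Lemma bregman_ge_strongly_convex (x xi z : X) :
  subdiff Rf x xi -> in_dom Rf z ->
  sigma * hinner (hsub z x) (hsub z x) <= bregman Rf xi z x.
Proof.
  intros [b [Hb Hsub]] [a Ha].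
  unfold bregman. rewrite Ha, Hb. simpl.
  set (N := hinner (hsub z x) (hsub z x)).
  assert (HN : 0 <= N) by apply hinner_pos.
  apply Rle_of_forall_contract; [nra|]. intros t Ht.
  pose proof (HRsc z x a b t Ha Hb ltac:(lra)) as C.
  pose proof (Hsub (hadd (hscal t z) (hscal (1 - t) x))) as S.
  rewrite hnorm_sq in C. fold N in C.
  destruct (Rf (hadd (hscal t z) (hscal (1 - t) x))) as [v| |]; simpl in *; try contradiction.
  revert S. hinner_expand. intro S.
  apply (Rmult_le_reg_l t); [lra|].
  replace (t * ((1 - t) * (sigma * N))) with (sigma * t * (1 - t) * N) by ring.
  lra.
Qed.

Lemma gradRstar_unique (x u xi : X) :
  subdiff Rf x xi -> is_gradRstar Rf xi u -> u = x.
Proof.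
  intros Hx Hu. pose proof (bregman_ge_strongly_convex x xi u Hx (proj1 Hu)) as B.
  destruct Hx as [b [Hb _]]. destruct Hu as [[a Ha] Hm].
  specialize (Hm x). rewrite Ha, Hb in Hm. simpl in Hm.
  unfold bregman in B. rewrite Ha, Hb, (hinner_sub_r u x xi) in B. simpl in B.
  apply hsub_eq0, hinner_self_le0.
  pose proof (hinner_pos X (hsub u x)). nra.
Qed.

End StrongConvexity.

Section Adjoint.

Context {X Y : Hilbert} (A : X -> Y) (As : Y -> X).
Hypothesis HA_add : forall h k, A (hadd h k) = hadd (A h) (A k).
Hypothesis HA_scal : forall a h, A (hscal a h) = hscal a (A h).
Hypothesis HA_adj : forall h w, hinner (A h) w = hinner h (As w).

Lemma adjoint_zero : As hzero = hzero.
Proof.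
  apply hinner_inj; intro h. rewrite hinner_sym, <- HA_adj. hinner_expand. reflexivity.
Qed.

Lemma adjoint_norm_le (c : R) : (forall h, hnorm (A h) <= c * hnorm h) ->
  forall w, hinner (As w) (As w) <= c * c * hinner w w.
Proof.
  intros Hc w. set (s := As w).
  assert (E : hnorm s * hnorm s = hinner (A s) w)
    by (rewrite hnorm_mul_self; unfold s; rewrite HA_adj; reflexivity).
  pose proof (cauchy_schwarz (A s) w).
  pose proof (hnorm_nonneg s). pose proof (hnorm_nonneg w).
  assert (hnorm (A s) * hnorm w <= c * hnorm s * hnorm w)
    by (apply Rmult_le_compat_r; auto).
  rewrite <- !hnorm_mul_self.
  destruct (Rle_lt_or_eq_dec _ _ (hnorm_nonneg s)) as [P|P]; [|rewrite <- P; nra].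
  assert (hnorm s <= c * hnorm w) by (apply (Rmult_le_reg_l (hnorm s)); lra).
  nra.
Qed.

Lemma linear_sub (h k : X) : A (hsub h k) = hsub (A h) (A k).
Proof. unfold hsub. rewrite HA_add, hopp_scal, HA_scal, <- hopp_scal. reflexivity. Qed.

Lemma tangential_cone_descent (F : X -> Y) (y : Y) (z zb : X) eta : F z = y ->
  hnorm (hsub (hsub (F z) (F zb)) (A (hsub z zb))) <= eta * hnorm (hsub (F z) (F zb)) ->
  (1 - eta) * hinner (hsub (F zb) y) (hsub (F zb) y) <= hinner (As (hsub (F zb) y)) (hsub zb z).
Proof.
  intros Hz Htcc. subst y.
  replace (hsub (F z) (F zb)) with (hopp (hsub (F zb) (F z))) in Htcc
    by (apply hinner_inj; intro w; hinner_expand; ring).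
  rewrite hnorm_opp in Htcc.
  apply hinner_near_opp_le in Htcc.
  rewrite (hinner_sym _ (As _)), <- HA_adj, linear_sub. rewrite linear_sub in Htcc.
  revert Htcc. hinner_expand.
  rewrite (hinner_sym _ (A zb) (F zb)), (hinner_sym _ (A zb) (F z)),
    (hinner_sym _ (A z) (F zb)), (hinner_sym _ (A z) (F z)). lra.
Qed.

End Adjoint.

Section StepSize.

Context {X Y : Hilbert} (rule : step_rule) (mu0 mu1 Lc : R).
Hypotheses (Hmu0 : 0 < mu0) (Hmu1 : 0 < mu1) (HLc : 0 < Lc).

Definition step_size_rule (r : Y) (g : X) (a : R) : Prop :=
  match rule with
  | ConstantStep => a = mu0 / Lc ^ 2
  | AdaptiveStep =>
      (r = hzero -> a = 0) /\
      (r <> hzero -> g = hzero -> a = mu1) /\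
      (r <> hzero -> g <> hzero -> a = Rmin (mu0 * (hnorm r) ^ 2 / (hnorm g) ^ 2) mu1)
  end.

Lemma step_size_pos r g a : step_size_rule r g a -> r <> hzero -> 0 < a.
Proof.
  unfold step_size_rule; intros Ha Hr. destruct rule.
  - rewrite Ha. apply Rdiv_lt_0_compat; [lra|]. apply pow_lt; lra.
  - destruct Ha as (_ & A2 & A3).
    destruct (classic (g = hzero)) as [Hg|Hg]; [rewrite A2; auto|].
    rewrite A3, !hnorm_sq by auto.
    pose proof (hinner_self_gt0 r Hr). pose proof (hinner_self_gt0 g Hg).
    unfold Rmin; destruct Rle_dec; auto.
    apply Rdiv_lt_0_compat; nra.
Qed.

Lemma step_size_nonneg r g a : step_size_rule r g a -> 0 <= a.
Proof.
  intro Ha. destruct (classic (r = hzero)) as [Hr|Hr]; [|apply Rlt_le; eapply step_size_pos; eauto].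
  unfold step_size_rule in Ha. destruct rule.
  - rewrite Ha. apply Rlt_le, Rdiv_lt_0_compat; [lra|]. apply pow_lt; lra.
  - rewrite (proj1 Ha Hr). lra.
Qed.

Lemma step_size_le r g a : step_size_rule r g a -> hinner g g <= Lc * Lc * hinner r r ->
  a * hinner g g <= mu0 * hinner r r.
Proof.
  unfold step_size_rule; intros Ha Hg. pose proof (hinner_pos _ r). destruct rule.
  - rewrite Ha.
    apply (Rmult_le_compat_l (mu0 / Lc ^ 2)) in Hg.
    2: { apply Rlt_le, Rdiv_lt_0_compat; [lra|]. apply pow_lt; lra. }
    replace (mu0 / Lc ^ 2 * (Lc * Lc * hinner r r)) with (mu0 * hinner r r) in Hg
      by (field; lra). exact Hg.
  - destruct Ha as (A1 & A2 & A3).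
    destruct (classic (r = hzero)) as [Hr|Hr].
    { rewrite A1 by auto. rewrite Hr, hinner_zero_l. lra. }
    destruct (classic (g = hzero)) as [Hg0|Hg0].
    { rewrite Hg0, hinner_zero_l. nra. }
    rewrite A3, !hnorm_sq by auto.
    pose proof (hinner_self_gt0 g Hg0).
    eapply Rle_trans; [apply Rmult_le_compat_r; [lra|apply Rmin_l]|].
    right. field. lra.
Qed.

End StepSize.

Lemma betacap_le beta t : betacap beta t <= t.
Proof. destruct beta; simpl; [apply Rmin_l|lra|lra]. Qed.

Lemma betacap_nonneg beta t : Rbar_lt 0 beta -> 0 <= t -> 0 <= betacap beta t.
Proof.
  intros Hb Ht. destruct beta as [b| |]; simpl in *; [|lra|lra].
  unfold Rmin; destruct Rle_dec; lra.
Qed.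

Section Momentum.

Context {X : Hilbert} (beta : Rbar) (sigma : R).
Hypothesis Hbeta : Rbar_lt 0 beta.

Definition momentum_rule (a : R) (g m : X) (gam b : R) : Prop :=
  (m = hzero -> b = 0) /\
  (m <> hzero -> b = betacap beta
     (Rmax 0 ((a * hinner g m - 2 * sigma * gam) / (hnorm m) ^ 2))).

Lemma momentum_nonneg a g m gam b : momentum_rule a g m gam b -> 0 <= b.
Proof.
  intros [B1 B2]. destruct (classic (m = hzero)) as [Hm|Hm].
  - rewrite B1 by auto. lra.
  - rewrite B2 by auto. apply betacap_nonneg, Rmax_l. exact Hbeta.
Qed.

Lemma momentum_pos_le a g m gam b : momentum_rule a g m gam b -> 0 < b ->
  b * hinner m m <= a * hinner g m - 2 * sigma * gam.
Proof.
  intros [B1 B2] Hb. destruct (classic (m = hzero)) as [Hm|Hm].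
  { rewrite B1 in Hb by auto. lra. }
  pose proof (hinner_self_gt0 m Hm). rewrite B2, hnorm_sq in * by auto.
  set (t := (a * hinner g m - 2 * sigma * gam) / hinner m m) in *.
  pose proof (betacap_le beta (Rmax 0 t)).
  assert (Et : Rmax 0 t = t) by (unfold Rmax in *; destruct Rle_dec; lra).
  rewrite Et in *.
  replace (a * hinner g m - 2 * sigma * gam) with (t * hinner m m) by (unfold t; field; lra).
  nra.
Qed.

Lemma momentum_le a g m gam b : momentum_rule a g m gam b ->
  b * (b * hinner m m - 2 * (a * hinner g m) + 4 * sigma * gam) <= 0.
Proof.
  intro Hr. pose proof (momentum_nonneg _ _ _ _ _ Hr) as Hb.
  destruct (Rle_lt_or_eq_dec _ _ Hb) as [P|P]; [|rewrite <- P; lra].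
  pose proof (momentum_pos_le _ _ _ _ _ Hr P). pose proof (hinner_pos _ m).
  assert (0 <= b * hinner m m) by (apply Rmult_le_pos; lra).
  nra.
Qed.

End Momentum.

Section Algorithm2.

Context {X Y : Hilbert} (Rf : X -> Rbar) (sigma : R) (F : X -> Y) (y : Y)
  (Lop : X -> X -> Y) (Lstar : X -> Y -> X) (eta Lc : R) (beta : Rbar) (mu0 mu1 : R)
  (rule : step_rule) (x0 xi0 xbar : X) (rho : R)
  (xi x : nat -> X) (alpha bet gam : nat -> R).

Local Notation ball := (hball x0 (2 * rho)).
Local Notation res n := (hsub (F (x n)) y).
Local Notation grad n := (Lstar (x n) (res n)).

Hypotheses (Hsigma : 0 < sigma) (HRsc : strongly_convex Rf sigma) (Heta : 0 <= eta < 1).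
Hypotheses (HLadd : forall z, ball z -> forall h k, Lop z (hadd h k) = hadd (Lop z h) (Lop z k))
  (HLscal : forall z, ball z -> forall a h, Lop z (hscal a h) = hscal a (Lop z h))
  (HLadj : forall z, ball z -> forall h w, hinner (Lop z h) w = hinner h (Lstar z w))
  (HLbound : forall z, ball z -> forall h, hnorm (Lop z h) <= Lc * hnorm h)
  (Htcc : forall z zb, ball z -> ball zb ->
     hnorm (hsub (hsub (F z) (F zb)) (Lop zb (hsub z zb))) <= eta * hnorm (hsub (F z) (F zb))).
Hypotheses (Hmu0 : 0 < mu0 < 4 * sigma * (1 - eta)) (Hmu1 : 0 < mu1) (HLc : 0 < Lc)
  (Hbeta : Rbar_lt 0 beta).
Hypotheses (Hgrad : forall n, is_gradRstar Rf (xi n) (x n))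
  (Halpha : forall n, step_size_rule rule mu0 mu1 Lc (res n) (grad n) (alpha n))
  (Hgam0 : gam 0%nat = 0)
  (Hgam : forall n, gam (S n) = hinner (mom xi (S n)) (hsub (x (S n)) (x n))
                       - (1 - eta) * alpha n * (hnorm (res n)) ^ 2 + bet n * gam n)
  (Hbet : forall n, momentum_rule beta sigma (alpha n) (grad n) (mom xi n) (gam n) (bet n))
  (Hupd : forall n, xi (S n) = hadd (hsub (xi n) (hscal (alpha n) (grad n)))
                                    (hscal (bet n) (mom xi n))).

Lemma alpha_grad_le n : ball (x n) ->
  alpha n * hinner (grad n) (grad n) <= mu0 * hinner (res n) (res n).
Proof.
  intro Hn. apply (step_size_le rule mu0 mu1 Lc); [lra|exact HLc|apply Halpha|].
  apply (adjoint_norm_le (Lop (x n))); auto.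
Qed.

Lemma alpha_nonneg n : 0 <= alpha n.
Proof. apply (step_size_nonneg rule mu0 mu1 Lc ltac:(lra) Hmu1 HLc _ _ _ (Halpha n)). Qed.

Lemma bet_nonneg n : 0 <= bet n.
Proof. exact (momentum_nonneg beta sigma Hbeta _ _ _ _ _ (Hbet n)). Qed.

Lemma inner_mom_succ k w :
  hinner (mom xi (S k)) w = - alpha k * hinner (grad k) w + bet k * hinner (mom xi k) w.
Proof. change (mom xi (S k)) with (hsub (xi (S k)) (xi k)). rewrite Hupd. hinner_expand. ring. Qed.

Lemma residual_le_grad_inner n xh : ball (x n) -> ball xh -> F xh = y ->
  (1 - eta) * hinner (res n) (res n) <= hinner (grad n) (hsub (x n) xh).
Proof.
  intros Hn Hh Hy. apply (tangential_cone_descent (Lop (x n))); auto.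
Qed.

(* [gam k] bounds this for every solution [xh] in the ball, without knowing [xh]. *)
Definition mom_inner (xh : X) (k : nat) : R := hinner (mom xi k) (hsub (x k) xh).

Lemma inner_mom_succ_le k xh : ball (x k) -> ball xh -> F xh = y -> mom_inner xh k <= gam k ->
  hinner (mom xi (S k)) (hsub (x k) xh)
    <= - (1 - eta) * alpha k * hinner (res k) (res k) + bet k * gam k.
Proof.
  intros Hk Hh Hy HE. rewrite inner_mom_succ.
  pose proof (residual_le_grad_inner k xh Hk Hh Hy).
  pose proof (alpha_nonneg k). pose proof (bet_nonneg k).
  unfold mom_inner in HE.
  assert (bet k * hinner (mom xi k) (hsub (x k) xh) <= bet k * gam k)
    by (apply Rmult_le_compat_l; auto).
  assert (alpha k * ((1 - eta) * hinner (res k) (res k))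
          <= alpha k * hinner (grad k) (hsub (x k) xh)) by (apply Rmult_le_compat_l; auto).
  lra.
Qed.

Lemma mom_inner_le_gam_succ k xh : ball (x k) -> ball xh -> F xh = y -> mom_inner xh k <= gam k ->
  mom_inner xh (S k) <= gam (S k).
Proof.
  intros Hk Hh Hy HE. pose proof (inner_mom_succ_le k xh Hk Hh Hy HE).
  unfold mom_inner. rewrite Hgam, hnorm_sq.
  replace (hsub (x (S k)) xh) with (hadd (hsub (x (S k)) (x k)) (hsub (x k) xh))
    by (apply hinner_inj; intro w; hinner_expand; ring).
  rewrite hinner_add_r. lra.
Qed.

Lemma norm_mom_succ_le k : ball (x k) ->
  hinner (mom xi (S k)) (mom xi (S k))
    <= 4 * sigma * ((1 - eta) * alpha k * hinner (res k) (res k) - bet k * gam k).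
Proof.
  intro Hk. set (M := mom xi (S k)).
  assert (EM : hinner M M = alpha k * alpha k * hinner (grad k) (grad k)
                 - 2 * (alpha k * bet k) * hinner (grad k) (mom xi k)
                 + bet k * bet k * hinner (mom xi k) (mom xi k)).
  { unfold M. rewrite inner_mom_succ, (hinner_sym _ (grad k)), (hinner_sym _ (mom xi k)),
      !inner_mom_succ, (hinner_sym _ (mom xi k) (grad k)). ring. }
  pose proof (alpha_grad_le k Hk). pose proof (alpha_nonneg k).
  pose proof (momentum_le beta sigma Hbeta _ _ _ _ _ (Hbet k)).
  pose proof (hinner_pos _ (res k)).
  assert (alpha k * (alpha k * hinner (grad k) (grad k))
            <= alpha k * (4 * sigma * (1 - eta) * hinner (res k) (res k))).
  { apply Rmult_le_compat_l; [lra|]. apply (Rle_trans _ (mu0 * hinner (res k) (res k))); [lra|].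
    apply Rmult_le_compat_r; lra. }
  nra.
Qed.

Lemma bregman_succ_le k xh : ball (x k) -> ball xh -> F xh = y -> in_dom Rf xh ->
  mom_inner xh k <= gam k ->
  bregman Rf (xi (S k)) xh (x (S k)) <= bregman Rf (xi k) xh (x k).
Proof.
  intros Hk Hh Hy Hdom HE.
  pose proof (bregman_three_point Rf (xi k) (xi (S k)) xh (x k) (x (S k))) as E.
  replace (hsub (x (S k)) xh) with (hadd (hsub (x (S k)) (x k)) (hsub (x k) xh)) in E
    by (apply hinner_inj; intro w; hinner_expand; ring).
  change (hsub (xi (S k)) (xi k)) with (mom xi (S k)) in E.
  rewrite hinner_add_r in E.
  set (d := hsub (x (S k)) (x k)) in E.
  pose proof (bregman_ge_strongly_convex Rf sigma Hsigma HRsc (x k) (xi k) (x (S k))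
                (gradRstar_subdiff _ _ _ (Hgrad k)) (proj1 (Hgrad (S k)))) as Hd.
  fold d in Hd.
  (* 4 sigma <M, d> <= 4 sigma^2 |d|^2 + |M|^2 absorbs the Bregman term D(x_{k+1}, x_k). *)
  pose proof (hinner_young (2 * sigma) d (mom xi (S k))) as Young.
  rewrite (hinner_sym _ d) in Young.
  pose proof (norm_mom_succ_le k Hk). pose proof (inner_mom_succ_le k xh Hk Hh Hy HE).
  nra.
Qed.

Hypotheses (Hrho : 0 <= rho) (Hxi_init : xi 0%nat = xi0) (Hxi0 : subdiff Rf x0 xi0)
  (Hxbar : F xbar = y) (Hbreg : bregman_le Rf xi0 xbar x0 (sigma * rho ^ 2)).

Lemma x_init : x 0%nat = x0.
Proof. apply (gradRstar_unique Rf sigma Hsigma HRsc x0 _ xi0 Hxi0). rewrite <- Hxi_init. apply Hgrad. Qed.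

Lemma near_xbar_of_bregman_le c xic : subdiff Rf c xic ->
  bregman Rf xic xbar c <= sigma * rho ^ 2 -> hinner (hsub xbar c) (hsub xbar c) <= rho * rho.
Proof.
  intros Hc Hbc. destruct (bregman_le_real _ _ _ _ _ Hbreg) as [Hdom _].
  pose proof (bregman_ge_strongly_convex Rf sigma Hsigma HRsc c xic xbar Hc Hdom).
  apply (Rmult_le_reg_l sigma); [exact Hsigma|]. lra.
Qed.

Lemma ball_of_bregman_le z xiz : subdiff Rf z xiz ->
  bregman Rf xiz xbar z <= sigma * rho ^ 2 -> ball z.
Proof.
  intros Hz Hbz. apply (hball_of_common_near x0 xbar z rho Hrho).
  - apply (near_xbar_of_bregman_le _ xi0 Hxi0), bregman_le_real, Hbreg.
  - exact (near_xbar_of_bregman_le _ _ Hz Hbz).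
Qed.

Lemma xbar_in_ball : ball xbar.
Proof.
  apply (hball_of_common_near x0 xbar xbar rho Hrho).
  - apply (near_xbar_of_bregman_le _ xi0 Hxi0), bregman_le_real, Hbreg.
  - rewrite hsub_self, hinner_zero_l. nra.
Qed.

Lemma iterates_in_ball k : ball (x k).
Proof.
  destruct (bregman_le_real _ _ _ _ _ Hbreg) as [Hdom Hb0].
  assert (Inv : ball (x k) /\ mom_inner xbar k <= gam k
                /\ bregman Rf (xi k) xbar (x k) <= sigma * rho ^ 2).
  { induction k as [|k (I1 & I2 & I3)].
    - rewrite x_init, Hxi_init.
      split; [apply (ball_of_bregman_le _ _ Hxi0 Hb0)|split; [|exact Hb0]].
      unfold mom_inner. simpl. rewrite hinner_zero_l, Hgam0. lra.
    - pose proof (bregman_succ_le k xbar I1 xbar_in_ball Hxbar Hdom I2).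
      split; [|split; [apply mom_inner_le_gam_succ; auto using xbar_in_ball|lra]].
      apply (ball_of_bregman_le _ _ (gradRstar_subdiff _ _ _ (Hgrad (S k)))). lra. }
  apply Inv.
Qed.

Lemma mom_inner_le_gam xh : ball xh -> F xh = y -> forall k, mom_inner xh k <= gam k.
Proof.
  intros Hh Hy. induction k as [|k IH].
  - unfold mom_inner. simpl. rewrite hinner_zero_l, Hgam0. lra.
  - apply mom_inner_le_gam_succ; auto using iterates_in_ball.
Qed.

Lemma bregman_nonincreasing xh : ball xh -> F xh = y -> in_dom Rf xh ->
  forall n j, bregman Rf (xi (n + j)) xh (x (n + j)) <= bregman Rf (xi n) xh (x n).
Proof.
  intros Hh Hy Hdom n j. induction j as [|j IH]; [rewrite Nat.add_0_r; lra|].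
  rewrite Nat.add_succ_r.
  pose proof (bregman_succ_le (n + j) xh (iterates_in_ball _) Hh Hy Hdom
                (mom_inner_le_gam xh Hh Hy _)).
  lra.
Qed.

Theorem iterates_stationary_of_solution n : F (x n) = y ->
  forall m, (n <= m)%nat -> x m = x n.
Proof.
  intros Hn m Hm.
  pose proof (bregman_nonincreasing (x n) (iterates_in_ball n) Hn (proj1 (Hgrad n)) n (m - n))
    as Hdec.
  replace (n + (m - n))%nat with m in Hdec by lia. rewrite bregman_self in Hdec.
  pose proof (bregman_ge_strongly_convex Rf sigma Hsigma HRsc (x m) (xi m) (x n)
                (gradRstar_subdiff _ _ _ (Hgrad m)) (proj1 (Hgrad n))).
  symmetry. apply hsub_eq0, hinner_self_le0.
  apply (Rmult_le_reg_l sigma); [exact Hsigma|]. lra.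
Qed.

Lemma solution_of_dual_stationary n : xi (S n) = xi n -> F (x n) = y.
Proof.
  intro Hxi.
  assert (HM : forall w, hinner (mom xi (S n)) w = 0).
  { intro w. change (mom xi (S n)) with (hsub (xi (S n)) (xi n)).
    rewrite Hxi, hsub_self. apply hinner_zero_l. }
  (* The momentum rule with m_{n+1} = 0 forces bet_n <m_n,m_n> = alpha_n <g_n, m_n>. *)
  assert (Hbg : bet n * gam n <= 0).
  { destruct (Rle_lt_or_eq_dec _ _ (bet_nonneg n)) as [P|P]; [|rewrite <- P; lra].
    pose proof (momentum_pos_le beta sigma _ _ _ _ _ (Hbet n) P).
    pose proof (inner_mom_succ n (mom xi n)) as E. rewrite HM in E.
    nra. }
  pose proof (inner_mom_succ_le n xbar (iterates_in_ball n) xbar_in_ball Hxbar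
                (mom_inner_le_gam xbar xbar_in_ball Hxbar n)) as Hdesc.
  rewrite HM in Hdesc.
  apply hsub_eq0. destruct (classic (res n = hzero)) as [Z|Z]; [exact Z|exfalso].
  pose proof (step_size_pos rule mu0 mu1 Lc ltac:(lra) Hmu1 HLc _ _ _ (Halpha n) Z).
  pose proof (hinner_self_gt0 _ Z).
  assert (0 < (1 - eta) * alpha n * hinner (res n) (res n))
    by (apply Rmult_lt_0_compat; [apply Rmult_lt_0_compat|]; lra).
  lra.
Qed.

Lemma mom_succ_of_solution k : F (x k) = y -> mom xi (S k) = hscal (bet k) (mom xi k).
Proof.
  intro Hk. apply hinner_inj; intro w. rewrite inner_mom_succ, Hk, hsub_self.
  rewrite (adjoint_zero (Lop (x k))) by auto using iterates_in_ball.
  hinner_expand. ring.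
Qed.

Theorem dual_iterates_stationary n : xi (S n) = xi n ->
  forall m, (n <= m)%nat -> xi m = xi n.
Proof.
  intros Hxi m Hm.
  pose proof (solution_of_dual_stationary n Hxi) as Hn.
  assert (Hj : forall j, mom xi (S (n + j)) = hzero /\ xi (n + j)%nat = xi n).
  { induction j as [|j [IH1 IH2]].
    - rewrite Nat.add_0_r. split; [|reflexivity].
      change (mom xi (S n)) with (hsub (xi (S n)) (xi n)). rewrite Hxi. apply hsub_self.
    - rewrite Nat.add_succ_r. split.
      + rewrite mom_succ_of_solution, IH1.
        * apply hinner_inj; intro w. hinner_expand. ring.
        * rewrite (iterates_stationary_of_solution n Hn) by lia. exact Hn.
      + rewrite <- IH2. apply hsub_eq0, IH1. }
  replace m with (n + (m - n))%nat by lia. apply Hj.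
Qed.

End Algorithm2.

(* Properness, lower semicontinuity, weak closedness of F and continuity of L are needed
   for the convergence theory of Algorithm 2, not for these stationarity properties. *)
Theorem mainTheorem6
  (X Y : Hilbert) (Rf : X -> Rbar) (sigma : R)
  (F : X -> Y) (domF : X -> Prop) (y : Y)
  (rho : R) (x0 xi0 xbar : X)
  (Lop : X -> X -> Y) (Lstar : X -> Y -> X) (eta Lc : R)
  (beta : Rbar) (mu0 mu1 : R) (rule : step_rule)
  (xi x : nat -> X) (alpha bet gam : nat -> R)
  (Hsigma : 0 < sigma)
  (HRproper : proper_fun Rf) (HRlsc : lsc_fun Rf) (HRsc : strongly_convex Rf sigma)
  (Hrho : 0 < rho) (Hxi0 : subdiff Rf x0 xi0)
  (HdomF : forall z, hball x0 (2 * rho) z -> domF z)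
  (Hxbar_dom : domF xbar) (Hxbar : F xbar = y)
  (Hbreg : bregman_le Rf xi0 xbar x0 (sigma * rho ^ 2))
  (HFwc : forall (u : nat -> X) (z : X) (v : Y),
      (forall n, domF (u n)) -> hweak_cvg u z -> hcvg (fun n => F (u n)) v ->
      domF z /\ F z = v)
  (HLadd : forall z, hball x0 (2 * rho) z ->
      forall h k, Lop z (hadd h k) = hadd (Lop z h) (Lop z k))
  (HLscal : forall z, hball x0 (2 * rho) z ->
      forall a h, Lop z (hscal a h) = hscal a (Lop z h))
  (HLadj : forall z, hball x0 (2 * rho) z ->
      forall h w, hinner (Lop z h) w = hinner h (Lstar z w))
  (HLcont : forall z, hball x0 (2 * rho) z -> forall eps, 0 < eps ->
      exists d, 0 < d /\ forall z', hball x0 (2 * rho) z' -> hnorm (hsub z' z) < d ->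
        forall h, hnorm (hsub (Lop z' h) (Lop z h)) <= eps * hnorm h)
  (Heta : 0 <= eta < 1)
  (Htcc : forall z zb, hball x0 (2 * rho) z -> hball x0 (2 * rho) zb ->
      hnorm (hsub (hsub (F z) (F zb)) (Lop zb (hsub z zb)))
        <= eta * hnorm (hsub (F z) (F zb)))
  (HLc : 0 < Lc)
  (HLbound : forall z, hball x0 (2 * rho) z -> forall h, hnorm (Lop z h) <= Lc * hnorm h)
  (Hbeta : Rbar_lt (Finite 0) beta)
  (Hmu0 : 0 < mu0 < 4 * sigma * (1 - eta)) (Hmu1 : 0 < mu1)
  (Hrun : alg2_run Rf F y Lstar sigma eta Lc beta mu0 mu1 rule xi0 xi x alpha bet gam) :
  (forall n, F (x n) = y -> forall m, (n < m)%nat -> x m = x n) /\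
  (forall n, xi (S n) = xi n ->
     F (x n) = y /\ forall m, (n < m)%nat -> x m = x n /\ xi m = xi n).
Proof.
  destruct Hrun as (Hxi_init & Hgrad & Halpha & Hgam0 & Hgam & Hbet & Hupd).
  assert (Hrho' : 0 <= rho) by lra.
  pose proof (iterates_stationary_of_solution Rf sigma F y Lop Lstar eta Lc beta mu0 mu1 rule
                x0 xi0 xbar rho xi x alpha bet gam) as primal.
  pose proof (solution_of_dual_stationary Rf sigma F y Lop Lstar eta Lc beta mu0 mu1 rule
                x0 xi0 xbar rho xi x alpha bet gam) as solves.
  pose proof (dual_iterates_stationary Rf sigma F y Lop Lstar eta Lc beta mu0 mu1 rule
                x0 xi0 xbar rho xi x alpha bet gam) as dual.
  split.
  - intros n Hn m Hm. apply primal; auto; lia.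
  - intros n Hxi. assert (Hn : F (x n) = y) by (apply solves; auto).
    split; [exact Hn|]. intros m Hm. split; [apply primal|apply dual]; auto; lia.
Qed.
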